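(* Let $A, C, D$ be binary random variables, with $A$ taking values $a,\overline{a}$, $C$ taking values $c,\overline{c}$, $D$ taking values $d,\overline{d}$, and let $Y$ be a real random variable with finite expectation. Suppose the joint distribution factorizes as \[ p(A,C,D,Y)=p(C)\,p(D\mid C)\,p(A\mid C)\,p(Y\mid A,C), \] and that every event $\{A=x, C=y, D=z\}$ has positive probability. Let $p(c)=0.5$, $p(d\mid c)=p(\overline{d}\mid\overline{c})\ge 0.5$ and $p(\overline{a}\mid\overline{c})\ge p(a\mid c)\ge 0.5$. If \[ E[Y|a,c]-E[Y|a,\overline{c}]\ \le\ E[Y|\overline{a},\overline{c}]-E[Y|\overline{a},c]\ \le\ 0, \] then $RD_{crude}\le RD_{true}$ and $RD_{obs}\le RD_{true}$.
   Context: $RD_{true}=E[Y|a,c]p(c)+E[Y|a,\overline{c}]p(\overline{c})-E[Y|\overline{a},c]p(c)-E[Y|\overline{a},\overline{c}]p(\overline{c})$; $RD_{crude}=E[Y|a]-E[Y|\overline{a}]$; $RD_{obs}=E[Y|a,d]p(d)+E[Y|a,\overline{d}]p(\overline{d})-E[Y|\overline{a},d]p(d)-E[Y|\overline{a},\overline{d}]p(\overline{d})$. *)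

From HB Require Import structures.
From mathcomp Require Import all_boot all_order all_algebra.
From mathcomp Require Import all_classical all_reals all_analysis.
Set Implicit Arguments. Unset Strict Implicit. Unset Printing Implicit Defensive.
Import Order.TTheory GRing.Theory Num.Theory.
Local Open Scope classical_set_scope.
Local Open Scope ring_scope.

Definition pr d (T : measurableType d) (R : realType) (P : probability T R)
  (S : set T) : R := fine (P S).

Definition condE d (T : measurableType d) (R : realType) (P : probability T R)
  (Y : T -> R) (S : set T) : R :=
  fine (\int[P]_(t in S) (Y t)%:E) / pr P S.

Definition cpr d (T : measurableType d) (R : realType) (P : probability T R)
  (S B : set T) : R := pr P (S `&` B) / pr P B.

(* Events {X = x}; the value [true] encodes x, [false] encodes \overline{x}. *)
Definition ev (T : Type) (X : T -> bool) (x : bool) : set T := [set t | X t = x].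

Definition RD_true d (T : measurableType d) (R : realType) (P : probability T R)
  (A C : T -> bool) (Y : T -> R) : R :=
  condE P Y (ev A true `&` ev C true) * pr P (ev C true)
  + condE P Y (ev A true `&` ev C false) * pr P (ev C false)
  - condE P Y (ev A false `&` ev C true) * pr P (ev C true)
  - condE P Y (ev A false `&` ev C false) * pr P (ev C false).

Definition RD_crude d (T : measurableType d) (R : realType) (P : probability T R)
  (A : T -> bool) (Y : T -> R) : R :=
  condE P Y (ev A true) - condE P Y (ev A false).

From HB Require Import structures.
From mathcomp Require Import all_boot all_order all_algebra.
From mathcomp Require Import all_classical all_reals all_analysis.
From mathcomp Require Import measurable_realfun ring lra.
Set Implicit Arguments. Unset Strict Implicit. Unset Printing Implicit Defensive.
Import Order.TTheory GRing.Theory Num.Theory.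
Local Open Scope classical_set_scope.
Local Open Scope ring_scope.

(* Write alpha = p(a|c), beta = p(abar|cbar), q = p(d|c) = p(dbar|cbar) and
   m_xy = E[Y|A=x,C=y].  The factorization makes Y independent of D given
   (A, C), so E[Y|a,d] is the average of m_ac and m_acbar weighted by
   p(a,c,d) : p(a,cbar,d), and similarly for the other observed strata; the
   crude contrast is the special case q = 1/2.  Comparing with
   RD_true = (m_ac + m_acbar)/2 - (m_abarc + m_abarcbar)/2 gives
     RD - RD_true = ((m_ac - m_acbar) b(alpha/(1-beta))
                     - (m_abarcbar - m_abarc) b(beta/(1-alpha))) / 2,
   where b(r) = (r^2 - 1)/(r^2 + K r + 1) with K = q/(1-q) + (1-q)/q is
   nonnegative and nondecreasing for r >= 1.  As 1 <= beta/(1-alpha) <=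
   alpha/(1-beta), the hypotheses on the means make this nonpositive. *)

Section weighted_averages.
Variable R : realFieldType.
Implicit Types (c q u v x y K r s : R).

Definition wavg u v x y : R := (u * x + v * y) / (u + v).

(* Mean over the strata d, dbar of a binary D with p(d|c) = p(dbar|cbar) = q,
   when x and y are mixed with weights u : v before stratifying. *)
Definition strat_avg q u v x y : R :=
  (wavg (q * u) ((1 - q) * v) x y + wavg ((1 - q) * u) (q * v) x y) / 2.

Definition odds_bias K r : R := (r ^+ 2 - 1) / (r ^+ 2 + K * r + 1).

Lemma wavgZ c u v x y : c != 0 -> wavg (c * u) (c * v) x y = wavg u v x y.
Proof.
by move=> c0; rewrite /wavg -!mulrA -!mulrDr invfM mulrACA divff // mul1r.
Qed.

Lemma wavgC u v x y : wavg u v x y = wavg v u y x.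
Proof. by rewrite /wavg addrC [v + u]addrC. Qed.

Lemma strat_avg_half u v x y : strat_avg 2^-1 u v x y = wavg u v x y.
Proof.
rewrite /strat_avg (_ : 1 - 2^-1 = 2^-1); last by field.
by rewrite wavgZ ?invr_eq0 ?pnatr_eq0 // mulrDl -splitr.
Qed.

Lemma odds_bias_denom_gt0 K r : 0 <= K -> 0 < r -> 0 < r ^+ 2 + K * r + 1.
Proof. by move=> K0 r0; have := mulr_ge0 K0 (ltW r0); have := sqr_ge0 r; lra. Qed.

Lemma strat_avg_sub_mid q u v x y : 0 < q < 1 -> 0 < u -> 0 < v ->
  strat_avg q u v x y
  = (x + y) / 2 + (x - y) / 2 * odds_bias (q / (1 - q) + (1 - q) / q) (u / v).
Proof.
move=> /andP[q0 q1] u0 v0; have q1' : 0 < 1 - q by rewrite subr_gt0.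
rewrite /strat_avg /wavg /odds_bias; field.
have quv : 0 < q * u + (1 - q) * v by rewrite addr_gt0 ?mulr_gt0.
have quv' : 0 < (1 - q) * u + q * v by rewrite addr_gt0 ?mulr_gt0.
have quv2 := mulr_gt0 quv quv'.
rewrite !gt_eqF //; nra.
Qed.

Lemma odds_bias_ge0 K r : 0 <= K -> 1 <= r -> 0 <= odds_bias K r.
Proof.
move=> K0 r1; have r0 : 0 < r by apply: lt_le_trans r1.
apply: divr_ge0; last exact/ltW/odds_bias_denom_gt0.
by rewrite subr_ge0 expr_ge1 // ltW.
Qed.

Lemma odds_bias_le K r s : 0 <= K -> 0 < r -> r <= s ->
  odds_bias K r <= odds_bias K s.
Proof.
move=> K0 r0 rs; have s0 : 0 < s := lt_le_trans r0 rs.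
have Dr := odds_bias_denom_gt0 K0 r0; have Ds := odds_bias_denom_gt0 K0 s0.
rewrite -subr_ge0.
have -> : odds_bias K s - odds_bias K r = (s - r) * (K * r * s + 2 * (r + s) + K)
    / ((r ^+ 2 + K * r + 1) * (s ^+ 2 + K * s + 1)).
  by rewrite /odds_bias; field; rewrite !gt_eqF.
apply: divr_ge0; last by rewrite ltW ?mulr_gt0.
apply: mulr_ge0; first by rewrite subr_ge0.
by have := mulr_ge0 (mulr_ge0 K0 (ltW r0)) (ltW s0); lra.
Qed.

Lemma strat_avg_contrast_le q a b m1 m2 m3 m4 :
  0 < q < 1 -> 2^-1 <= a -> a <= b -> b < 1 ->
  m1 - m2 <= m4 - m3 -> m4 - m3 <= 0 ->
  strat_avg q a (1 - b) m1 m2 - strat_avg q b (1 - a) m4 m3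
  <= (m1 + m2) / 2 - (m3 + m4) / 2.
Proof.
move=> q01 a_ge ab b1 hm1 hm2; have /andP[q0 q1] := q01.
have a0 : 0 < a by lra.
have b0 : 0 < b by lra.
have a1 : 0 < 1 - a by lra.
have b1' : 0 < 1 - b by lra.
rewrite !strat_avg_sub_mid //.
set K := q / (1 - q) + (1 - q) / q.
have K0 : 0 <= K by rewrite addr_ge0 // divr_ge0 // ltW // subr_gt0.
have odds_ge1 : 1 <= b / (1 - a) by rewrite ler_pdivlMr // mul1r; lra.
have odds_le : b / (1 - a) <= a / (1 - b).
  by rewrite ler_pdivrMr // mulrAC ler_pdivlMr //; nra.
set s1 := odds_bias K (a / (1 - b)); set s2 := odds_bias K (b / (1 - a)).
have s2_ge0 : 0 <= s2 := odds_bias_ge0 K0 odds_ge1.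
have s12 : s2 <= s1 := odds_bias_le K0 (lt_le_trans ltr01 odds_ge1) odds_le.
have : (m1 - m2) * s1 <= (m4 - m3) * s2.
  apply: (@le_trans _ _ ((m4 - m3) * s1)).
    exact: ler_wpM2r (le_trans s2_ge0 s12) _ _ hm1.
  exact: ler_wnM2l hm2 _ _ s12.
lra.
Qed.
End weighted_averages.

Section integral_preimage_scale.
Context d (T : measurableType d) (R : realType) (mu : {measure set T -> \bar R}).
Local Open Scope ereal_scope.

Lemma ge0_integral_mrestr (S : set T) (mS : measurable S) (f : T -> \bar R) :
  measurable_fun [set: T] f -> (forall x, 0 <= f x) ->
  \int[mrestr mu mS]_x f x = \int[mu]_(x in S) f x.
Proof.
move=> mf f0; rewrite -(setUv S) ge0_integral_setU //; last 3 first.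
- exact: measurableC.
- by rewrite setUv.
- by rewrite disj_set2E setICr.
rewrite (@null_set_integral _ _ _ (mrestr mu mS) (~` S)); last 3 first.
- exact: measurableC.
- exact: measurable_funS mf.
- by rewrite [LHS]/= /mrestr setICl measure0.
rewrite adde0; apply: eq_measure_integral => A mA AS.
by rewrite [LHS]/= /mrestr setIidl.
Qed.

Variables (Y : T -> R) (mY : measurable_fun setT Y).
Variables (S1 S2 : set T) (mS1 : measurable S1) (mS2 : measurable S2).
Variable c : {nonneg R}.
Hypothesis preimage_scale : forall B, measurable B ->
  mu (S1 `&` Y @^-1` B) = c%:num%:E * mu (S2 `&` Y @^-1` B).

Lemma ge0_integral_preimage_scale (g : R -> \bar R) :
  measurable_fun setT g -> (forall y, 0 <= g y) ->
  \int[mu]_(x in S1) g (Y x) = c%:num%:E * \int[mu]_(x in S2) g (Y x).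
Proof.
move=> mg g0; have mgY : measurable_fun setT (g \o Y) by exact: measurableT_comp.
have gY0 x : 0 <= (g \o Y) x by exact: g0.
rewrite -(ge0_integral_mrestr mS1 mgY gY0) -(ge0_integral_mrestr mS2 mgY gY0).
rewrite -ge0_integral_mscale //.
have push (m : {measure set T -> \bar R}) :
    \int[m]_x (g \o Y) x = \int[pushforward m Y]_y g y.
  by rewrite (ge0_integral_pushforward mY) // preimage_setT.
rewrite !push; apply: eq_measure_integral => B mB _.
change (mu (Y @^-1` B `&` S1) = c%:num%:E * mu (Y @^-1` B `&` S2)).
by rewrite !(setIC (Y @^-1` B)) preimage_scale.
Qed.

Lemma integral_preimage_scale : mu.-integrable setT (EFin \o Y) ->
  \int[mu]_(x in S1) (Y x)%:E = c%:num%:E * \int[mu]_(x in S2) (Y x)%:E.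
Proof.
move=> iY; rewrite integralE [in RHS]integralE.
have mE : measurable_fun setT (@EFin R) by exact/measurable_EFinP.
have -> : \int[mu]_(x in S1) (EFin \o Y)^\+ x = c%:num%:E * \int[mu]_(x in S2) (EFin \o Y)^\+ x.
  rewrite funepos_comp; apply: ge0_integral_preimage_scale => //.
  exact: measurable_funepos.
have -> : \int[mu]_(x in S1) (EFin \o Y)^\- x = c%:num%:E * \int[mu]_(x in S2) (EFin \o Y)^\- x.
  rewrite funeneg_comp; apply: ge0_integral_preimage_scale => //.
  exact: measurable_funeneg.
rewrite [RHS]muleBr //; apply: fin_num_adde_defl; rewrite fin_numN.
by apply: integrable_fin_num => //; apply/integrable_funeneg/(integrableS _ _ _ iY).
Qed.

End integral_preimage_scale.

Lemma measurable_ev d (T : measurableType d) (X : T -> bool) (b : bool) :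
  measurable_fun setT X -> measurable (ev X b).
Proof. by move=> mX; rewrite -[ev X b]setTI; exact: (mX measurableT [set b] I). Qed.

Lemma ev_partition (T : Type) (X : T -> bool) (E : set T) :
  E = (E `&` ev X true) `|` (E `&` ev X false).
Proof.
rewrite -setIUr; apply/esym/setIidl => t _.
by rewrite /ev /=; case: (X t); [left|right].
Qed.

Lemma ev_disj (T : Type) (X : T -> bool) (E F : set T) :
  (E `&` ev X true) `&` (F `&` ev X false) = set0.
Proof. by apply/seteqP; split=> t //= [[_ Xt] [_]]; rewrite /ev /= Xt. Qed.

Section conditional_means.
Context d (T : measurableType d) (R : realType) (P : probability T R).
Implicit Types (S E B : set T) (X : T -> bool).

Lemma prE S : measurable S -> P S = (pr P S)%:E.
Proof. by move=> mS; rewrite /pr fineK // fin_num_measure. Qed.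

Lemma le_pr S1 S2 : measurable S1 -> measurable S2 -> S1 `<=` S2 ->
  pr P S1 <= pr P S2.
Proof.
by move=> m1 m2 S12; rewrite -lee_fin -!prE // le_measure // inE.
Qed.

Lemma pr_ev_split E X : measurable E -> measurable_fun setT X ->
  pr P E = pr P (E `&` ev X true) + pr P (E `&` ev X false).
Proof.
move=> mE mX; have mEX b : measurable (E `&` ev X b).
  by apply: measurableI => //; exact: measurable_ev.
rewrite /pr {1}(ev_partition X E) measureU ?ev_disj //.
by rewrite fineD // fin_num_measure.
Qed.

Lemma cpr_evN X b B : measurable B -> measurable_fun setT X -> pr P B != 0 ->
  cpr P (ev X (~~ b)) B = 1 - cpr P (ev X b) B.
Proof.
move=> mB mX B0; have sum1 : cpr P (ev X true) B + cpr P (ev X false) B = 1.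
  by rewrite /cpr -mulrDl !(setIC (ev X _)) -pr_ev_split // divff.
by case: b => /=; lra.
Qed.

Lemma pr_setI_cpr S B : pr P B != 0 -> pr P (S `&` B) = pr P B * cpr P S B.
Proof. by move=> B0; rewrite /cpr mulrC divfK. Qed.

Lemma cpr_ev_lt1 X b B : measurable B -> measurable_fun setT X ->
  0 < pr P (ev X (~~ b) `&` B) -> cpr P (ev X b) B < 1.
Proof.
move=> mB mX pos; have mXB : measurable (ev X (~~ b) `&` B).
  by apply: measurableI => //; exact: measurable_ev.
have B0 : 0 < pr P B by apply: lt_le_trans pos (le_pr mXB mB (@subIsetr _ _ _)).
by rewrite -subr_gt0 -(cpr_evN b mB mX (lt0r_neq0 B0)) divr_gt0.
Qed.

Variables (Y : T -> R) (mY : measurable_fun setT Y).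
Hypothesis iY : P.-integrable setT (EFin \o Y).

Definition partial_mean S : R := fine (\int[P]_(x in S) (Y x)%:E).

Lemma condEE S : condE P Y S = partial_mean S / pr P S.
Proof. by []. Qed.

Lemma partial_meanE S : measurable S ->
  (\int[P]_(x in S) (Y x)%:E = (partial_mean S)%:E)%E.
Proof. by move=> mS; rewrite fineK // integrable_fin_num // (integrableS _ _ _ iY). Qed.

Lemma partial_mean_ev_split E X : measurable E -> measurable_fun setT X ->
  partial_mean E = partial_mean (E `&` ev X true) + partial_mean (E `&` ev X false).
Proof.
move=> mE mX; have mEX b : measurable (E `&` ev X b).
  by apply: measurableI => //; exact: measurable_ev.
rewrite /partial_mean {1}(ev_partition X E) integral_setU ?disj_set2E ?ev_disj //.
- by rewrite !partial_meanE // -EFinD.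
- by apply/measurable_EFinP; apply: measurable_funS mY.
Qed.

Lemma condE_ev_split E X : measurable E -> measurable_fun setT X ->
  0 < pr P (E `&` ev X true) -> 0 < pr P (E `&` ev X false) ->
  condE P Y E = wavg (pr P (E `&` ev X true)) (pr P (E `&` ev X false))
                     (condE P Y (E `&` ev X true)) (condE P Y (E `&` ev X false)).
Proof.
move=> mE mX p1 p2; rewrite /wavg !condEE (partial_mean_ev_split mE mX).
by rewrite (pr_ev_split mE mX); field; rewrite !gt_eqF ?addr_gt0.
Qed.

Lemma condE_setI_indep S E : measurable S -> measurable E ->
  0 < pr P (S `&` E) ->
  (forall B : set R, measurable B ->
     pr P (S `&` E `&` Y @^-1` B) = pr P (S `&` E) * cpr P (Y @^-1` B) S) ->
  condE P Y (S `&` E) = condE P Y S.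
Proof.
move=> mS mE SE0 indep; have mSE := measurableI _ _ mS mE.
have S0 : 0 < pr P S by apply: lt_le_trans SE0 (le_pr mSE mS (@subIsetl _ _ _)).
have c0 : 0 <= pr P (S `&` E) / pr P S by rewrite divr_ge0 ?ltW.
have scale : forall B : set R, measurable B ->
    (P (S `&` E `&` Y @^-1` B) = (NngNum c0)%:num%:E * P (S `&` Y @^-1` B))%E.
  move=> B mB; have mYB : measurable (Y @^-1` B) by rewrite -[_ @^-1` _]setTI; exact: mY.
  rewrite !prE; try exact: measurableI.
  rewrite -EFinM indep // /cpr (setIC (Y @^-1` B)).
  by congr (_%:E) => /=; field; rewrite gt_eqF.
have := integral_preimage_scale mY mSE mS scale iY.
rewrite !partial_meanE // => -[]; rewrite !condEE => ->.
by field; rewrite !gt_eqF.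
Qed.

End conditional_means.

Section factorized_model.
Context d (T : measurableType d) (R : realType) (P : probability T R).
Variables (A C D : T -> bool) (Y : T -> R).
Hypotheses (mA : measurable_fun setT A) (mC : measurable_fun setT C)
  (mD : measurable_fun setT D) (mY : measurable_fun setT Y)
  (iY : P.-integrable setT (EFin \o Y)).
Hypothesis factorization : forall (x y z : bool) (B : set R), measurable B ->
  pr P (ev A x `&` ev C y `&` ev D z `&` Y @^-1` B)
  = pr P (ev C y) * cpr P (ev D z) (ev C y) * cpr P (ev A x) (ev C y)
    * cpr P (Y @^-1` B) (ev A x `&` ev C y).
Hypothesis cell_gt0 : forall x y z : bool, 0 < pr P (ev A x `&` ev C y `&` ev D z).

Local Notation cell x y z := (ev A x `&` ev C y `&` ev D z).
Local Notation m x y := (condE P Y (ev A x `&` ev C y)).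

Let mA_ x : measurable (ev A x). Proof. exact: measurable_ev. Qed.
Let mC_ y : measurable (ev C y). Proof. exact: measurable_ev. Qed.
Let mD_ z : measurable (ev D z). Proof. exact: measurable_ev. Qed.
Let mcell x y z : measurable (cell x y z).
Proof. by apply: measurableI => //; exact: measurableI. Qed.

Lemma pr_AC_gt0 x y : 0 < pr P (ev A x `&` ev C y).
Proof.
have mAC : measurable (ev A x `&` ev C y) by exact: measurableI.
exact: lt_le_trans (cell_gt0 x y true) (le_pr P (mcell _ _ _) mAC (@subIsetl _ _ _)).
Qed.

Lemma pr_DC_gt0 z y : 0 < pr P (ev D z `&` ev C y).
Proof.
have mDC : measurable (ev D z `&` ev C y) by exact: measurableI.
apply: lt_le_trans (cell_gt0 true y z) (le_pr P (mcell _ _ _) mDC _).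
by move=> t [[_ Ct] Dt]; split.
Qed.

Lemma pr_C_gt0 y : 0 < pr P (ev C y).
Proof.
apply: lt_le_trans (pr_AC_gt0 true y) (le_pr P _ (mC_ y) (@subIsetr _ _ _)).
exact: measurableI.
Qed.

Lemma pr_cell x y z :
  pr P (cell x y z) = pr P (ev C y) * cpr P (ev D z) (ev C y) * cpr P (ev A x) (ev C y).
Proof.
have := factorization x y z measurableT; rewrite preimage_setT setIT /cpr setTI.
by rewrite divff ?mulr1 // gt_eqF // pr_AC_gt0.
Qed.

Lemma condE_cell x y z : condE P Y (cell x y z) = m x y.
Proof.
by apply: condE_setI_indep => // [|B mB]; [exact: measurableI | rewrite factorization // pr_cell].
Qed.

Lemma condE_ev_A x : condE P Y (ev A x)
  = wavg (pr P (ev A x `&` ev C true)) (pr P (ev A x `&` ev C false)) (m x true) (m x false).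
Proof. by apply: condE_ev_split => //; exact: pr_AC_gt0. Qed.

Lemma condE_ev_AD x z : condE P Y (ev A x `&` ev D z)
  = wavg (pr P (cell x true z)) (pr P (cell x false z)) (m x true) (m x false).
Proof.
have mAD : measurable (ev A x `&` ev D z) by exact: measurableI.
rewrite (condE_ev_split mY iY mAD mC) !(setIAC (ev A x) (ev D z)) ?condE_cell //.
Qed.

Lemma pr_C_neq0 y : pr P (ev C y) != 0.
Proof. exact/lt0r_neq0/pr_C_gt0. Qed.

Lemma cpr_AN x y : cpr P (ev A (~~ x)) (ev C y) = 1 - cpr P (ev A x) (ev C y).
Proof. exact: (cpr_evN x (mC_ y) mA (pr_C_neq0 y)). Qed.

Lemma cpr_DN z y : cpr P (ev D (~~ z)) (ev C y) = 1 - cpr P (ev D z) (ev C y).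
Proof. exact: (cpr_evN z (mC_ y) mD (pr_C_neq0 y)). Qed.

Lemma cpr_A_lt1 x y : cpr P (ev A x) (ev C y) < 1.
Proof. exact: cpr_ev_lt1 (mC_ y) mA (pr_AC_gt0 _ y). Qed.

Lemma cpr_D_lt1 z y : cpr P (ev D z) (ev C y) < 1.
Proof. exact: cpr_ev_lt1 (mC_ y) mD (pr_DC_gt0 _ y). Qed.

Hypothesis pr_C_half : pr P (ev C true) = 2^-1.
Hypothesis cpr_D_sym : cpr P (ev D true) (ev C true) = cpr P (ev D false) (ev C false).

Local Notation alpha := (cpr P (ev A true) (ev C true)).
Local Notation beta := (cpr P (ev A false) (ev C false)).
Local Notation q := (cpr P (ev D true) (ev C true)).

Lemma pr_Cfalse_half : pr P (ev C false) = 2^-1.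
Proof.
have := pr_ev_split P measurableT mC; rewrite !setTI pr_C_half.
by rewrite {1}/pr probability_setT /=; lra.
Qed.

Lemma pr_D_half z : pr P (ev D z) = 2^-1.
Proof.
rewrite (pr_ev_split P (mD_ z) mC) !pr_setI_cpr ?pr_C_neq0 // pr_C_half pr_Cfalse_half.
rewrite -mulrDr -[RHS]mulr1; congr (_ * _).
have /= := cpr_DN true true; have /= := cpr_DN false false.
case: z => /= [-> _|_ ->]; first by rewrite cpr_D_sym addrC subrK.
by rewrite -cpr_D_sym subrK.
Qed.

Lemma RD_true_CE : RD_true P A C Y
  = (m true true + m true false) / 2 - (m false true + m false false) / 2.
Proof. by rewrite /RD_true pr_C_half pr_Cfalse_half; field. Qed.

Lemma RD_crudeE : RD_crude P A Y
  = strat_avg 2^-1 alpha (1 - beta) (m true true) (m true false)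
    - strat_avg 2^-1 beta (1 - alpha) (m false false) (m false true).
Proof.
rewrite /RD_crude !condE_ev_A !pr_setI_cpr ?pr_C_neq0 // pr_C_half pr_Cfalse_half.
rewrite (cpr_AN true true) (cpr_AN false false) !wavgZ ?invr_eq0 ?pnatr_eq0 //.
by rewrite !strat_avg_half (wavgC _ _ (m false true)).
Qed.

Lemma RD_true_DE : RD_true P A D Y
  = strat_avg q alpha (1 - beta) (m true true) (m true false)
    - strat_avg q beta (1 - alpha) (m false false) (m false true).
Proof.
rewrite /RD_true !condE_ev_AD !pr_cell pr_C_half pr_Cfalse_half !pr_D_half.
rewrite (cpr_AN true true) (cpr_AN false false) (cpr_DN true true) (cpr_DN false false).
rewrite -cpr_D_sym -!(mulrA 2^-1) !wavgZ ?invr_eq0 ?pnatr_eq0 //.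
rewrite !(wavgC _ _ (m false true)).
by rewrite /strat_avg; field.
Qed.

End factorized_model.

Theorem theorem5 (d : measure_display) (T : measurableType d) (R : realType)
  (P : probability T R) (A C D : T -> bool) (Y : T -> R)
  (mA : measurable_fun setT A) (mC : measurable_fun setT C)
  (mD : measurable_fun setT D) (mY : measurable_fun setT Y)
  (iY : P.-integrable setT (EFin \o Y))
  (* p(A,C,D,Y) = p(C) p(D|C) p(A|C) p(Y|A,C) *)
  (fact : forall (x y z : bool) (B : set R), measurable B ->
     pr P (ev A x `&` ev C y `&` ev D z `&` Y @^-1` B)
     = pr P (ev C y) * cpr P (ev D z) (ev C y) * cpr P (ev A x) (ev C y)
       * cpr P (Y @^-1` B) (ev A x `&` ev C y))
  (pos : forall x y z : bool, 0 < pr P (ev A x `&` ev C y `&` ev D z))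
  (pc : pr P (ev C true) = 2^-1)
  (pd1 : cpr P (ev D true) (ev C true) = cpr P (ev D false) (ev C false))
  (pd2 : 2^-1 <= cpr P (ev D true) (ev C true))
  (pa1 : cpr P (ev A true) (ev C true) <= cpr P (ev A false) (ev C false))
  (pa2 : 2^-1 <= cpr P (ev A true) (ev C true))
  (hY1 : condE P Y (ev A true `&` ev C true) - condE P Y (ev A true `&` ev C false)
         <= condE P Y (ev A false `&` ev C false) - condE P Y (ev A false `&` ev C true))
  (hY2 : condE P Y (ev A false `&` ev C false) - condE P Y (ev A false `&` ev C true)
         <= 0) :
  RD_crude P A Y <= RD_true P A C Y /\ RD_true P A D Y <= RD_true P A C Y.
Proof.
have beta_lt1 := cpr_A_lt1 mA mC mD pos false false.
have q_lt1 := cpr_D_lt1 mA mC mD pos true true.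
have half_gt0 : 0 < 2^-1 :> R by rewrite invr_gt0.
rewrite (RD_true_CE A Y mC pc); split.
- rewrite (RD_crudeE mA mC mD mY iY pos pc).
  apply: strat_avg_contrast_le => //.
  by rewrite half_gt0 invf_lt1 ?ltr1n.
- rewrite (RD_true_DE mA mC mD mY iY fact pos pc pd1).
  apply: strat_avg_contrast_le => //.
  by rewrite (lt_le_trans half_gt0 pd2).
Qed.
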